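(* Let $f:\mathcal R\to\mathrm{Nil}_3$ be a conformal minimal immersion which is equivariant, i.e. there are one-parameter groups $\gamma_t\in\mathrm{Aut}(\mathcal R)$ and $\rho_t\in\mathrm{Iso}_\circ(\mathrm{Nil}_3)$, $\rho_t$ not identically the identity, with $f\circ\gamma_t=\rho_t\circ f$ for all $t$. Then $f$ is either a helicoidal surface (its image is invariant under a one-parameter group of helicoidal motions $\rho^{(c,\alpha)}_t$, possibly with pitch $c=0$) or a translation invariant surface (its image is invariant under a one-parameter group of translations $t\mapsto(ta_1,ta_2,tc)\in\mathrm{Nil}_3$ acting by left multiplication).
   Context: $\mathrm{Nil}_3$ denotes $\mathbb R^3$ with the group law $(a_1,a_2,a_3)\cdot(x_1,x_2,x_3)=(a_1+x_1,a_2+x_2,a_3+x_3+\tfrac12(a_1x_2-a_2x_1))$ and the left-invariant metric $dx_1^2+dx_2^2+(dx_3+\tfrac12(x_2dx_1-x_1dx_2))^2$. $\mathrm{Iso}_\circ(\mathrm{Nil}_3)\cong\mathrm{Nil}_3\rtimes\mathrm U_1$, where $(a,e^{i\theta})$ acts by $(a,e^{i\theta}).(x_1,x_2,x_3)=a\cdot(\cos\theta\, x_1-\sin\theta\, x_2,\ \sin\theta\, x_1+\cos\theta\, x_2,\ x_3)$; $a\in\mathrm{Nil}_3$ is identified with $(a,1)$ and $e^{i\theta}$ with $((0,0,0),e^{i\theta})$. A helicoidal motion with pitch $c$ along the axis through $\alpha=(a_1,a_2,0)$ is the one-parameter group $\rho^{(c,\alpha)}_t=\alpha\,(0,0,tc)\,e^{it}\,\alpha^{-1}$.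 *)

From Stdlib Require Import Reals Lra List.
Open Scope R_scope.

Definition C := (R * R)%type.
Definition cadd (z w : C) : C := (fst z + fst w, snd z + snd w).
Definition csub (z w : C) : C := (fst z - fst w, snd z - snd w).
Definition cmul (z w : C) : C :=
  (fst z * fst w - snd z * snd w, fst z * snd w + snd z * fst w).
Definition cinv (z : C) : C :=
  let n := fst z * fst z + snd z * snd z in (fst z / n, - snd z / n).
Definition cdiv (z w : C) : C := cmul z (cinv w).
Definition cnorm (z : C) : R := sqrt (fst z * fst z + snd z * snd z).

Definition open2 (D : C -> Prop) : Prop :=
  forall z, D z -> exists e, 0 < e /\ forall w, cnorm (csub w z) < e -> D w.

Definition holo_on (D : C -> Prop) (g : C -> C) : Prop :=
  open2 D /\
  forall z, D z -> exists w : C, forall eps, 0 < eps -> exists del, 0 < del /\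
    forall h, h <> (0, 0) -> cnorm h < del -> D (cadd z h) ->
      cnorm (csub (cdiv (csub (g (cadd z h)) (g z)) h) w) < eps.

Definition chart_overlap {X I : Type} (dom : I -> X -> Prop) (ch : I -> X -> C)
  (i j : I) (z : C) : Prop := exists x, dom i x /\ dom j x /\ ch i x = z.

Definition open_in {X I : Type} (dom : I -> X -> Prop) (ch : I -> X -> C)
  (S : X -> Prop) : Prop :=
  forall i, open2 (fun z => exists x, dom i x /\ S x /\ ch i x = z).

Record RiemannSurface := {
  rs_car : Type;
  rs_idx : Type;
  rs_dom : rs_idx -> rs_car -> Prop;
  rs_chart : rs_idx -> rs_car -> C;
  rs_inhabited : inhabited rs_car;
  rs_cover : forall x, exists i, rs_dom i x;
  rs_inj : forall i x y, rs_dom i x -> rs_dom i y ->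
             rs_chart i x = rs_chart i y -> x = y;
  (* holomorphic transition maps (for i = j this says the chart images are open) *)
  rs_trans : forall i j, exists tau : C -> C,
      holo_on (chart_overlap rs_dom rs_chart i j) tau /\
      forall x, rs_dom i x -> rs_dom j x -> tau (rs_chart i x) = rs_chart j x;
  rs_hausdorff : forall x y, x <> y -> exists U V,
      open_in rs_dom rs_chart U /\ open_in rs_dom rs_chart V /\
      U x /\ V y /\ forall z, ~ (U z /\ V z);
  rs_connected : forall U V,
      open_in rs_dom rs_chart U -> open_in rs_dom rs_chart V ->
      (forall x, U x \/ V x) -> (forall x, ~ (U x /\ V x)) ->
      (forall x, U x) \/ (forall x, V x)
}.

Definition rs_open (X : RiemannSurface) (S : rs_car X -> Prop) : Prop :=
  open_in (rs_dom X) (rs_chart X) S.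

Definition rs_continuous (X : RiemannSurface) (h : rs_car X -> rs_car X) : Prop :=
  forall S, rs_open X S -> rs_open X (fun x => S (h x)).

Definition rs_holomorphic (X : RiemannSurface) (h : rs_car X -> rs_car X) : Prop :=
  rs_continuous X h /\
  forall i j, exists tau : C -> C,
    holo_on (fun z => exists x, rs_dom X i x /\ rs_dom X j (h x) /\ rs_chart X i x = z) tau /\
    forall x, rs_dom X i x -> rs_dom X j (h x) -> tau (rs_chart X i x) = rs_chart X j (h x).

Definition rs_aut (X : RiemannSurface) (h : rs_car X -> rs_car X) : Prop :=
  rs_holomorphic X h /\ exists k, rs_holomorphic X k /\
    (forall x, k (h x) = x) /\ (forall x, h (k x) = x).

Definition aut_one_param (X : RiemannSurface) (g : R -> rs_car X -> rs_car X) : Prop :=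
  (forall t, rs_aut X (g t)) /\
  (forall s t x, g (s + t) x = g s (g t x)) /\
  (forall x t0 S, rs_open X S -> S (g t0 x) ->
     exists del, 0 < del /\ forall t, Rabs (t - t0) < del -> S (g t x)).

Definition R3 := (R * R * R)%type.
Definition p1 (p : R3) : R := fst (fst p).
Definition p2 (p : R3) : R := snd (fst p).
Definition p3 (p : R3) : R := snd p.

Definition nmul (a x : R3) : R3 :=
  (p1 a + p1 x, p2 a + p2 x, p3 a + p3 x + / 2 * (p1 a * p2 x - p2 a * p1 x)).
Definition ninv (a : R3) : R3 := (- p1 a, - p2 a, - p3 a).

Definition nrot (th : R) (x : R3) : R3 :=
  (cos th * p1 x - sin th * p2 x, sin th * p1 x + cos th * p2 x, p3 x).

(* action of (a, e^{i theta}) in Iso_o(Nil_3) = Nil_3 ⋊ U_1 *)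
Definition iso_act (a : R3) (th : R) (x : R3) : R3 := nmul a (nrot th x).

(* helicoidal motion rho^{(c,alpha)}_t, alpha = (a1,a2,0):
   alpha (0,0,tc) e^{it} alpha^{-1}, acting by composition *)
Definition helicoidal (c a1 a2 t : R) (x : R3) : R3 :=
  let alpha := (a1, a2, 0) in
  iso_act alpha 0 (iso_act (0, 0, t * c) 0 (iso_act (0, 0, 0) t (iso_act (ninv alpha) 0 x))).

(* metric dx1^2+dx2^2+(dx3+1/2(x2 dx1 - x1 dx2))^2 at p, as bilinear form *)
Definition nil_inner (p u v : R3) : R :=
  p1 u * p1 v + p2 u * p2 v +
  (p3 u + / 2 * (p2 p * p1 u - p1 p * p2 u)) *
  (p3 v + / 2 * (p2 p * p1 v - p1 p * p2 v)).

(* d w = iterated partial derivative along the word w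
   (false = d/dx, true = d/dy; the head of w is the last derivative taken);
   all exist and are continuous on D: h is C^infinity on D *)
Definition smooth_tower (D : C -> Prop) (h : C -> R) (d : list bool -> C -> R) : Prop :=
  (forall p, D p -> d nil p = h p) /\
  forall w p, D p ->
    derivable_pt_lim (fun t => d w (t, snd p)) (fst p) (d (false :: w) p) /\
    derivable_pt_lim (fun t => d w (fst p, t)) (snd p) (d (true :: w) p) /\
    (forall eps, 0 < eps -> exists del, 0 < del /\
       forall q, D q -> cnorm (csub q p) < del -> Rabs (d w q - d w p) < eps).

(* Pointwise conditions, in a conformal coordinate z = x + i y, for a local
   expression F with value P, F_x, F_y and Laplacian L = F_xx + F_yy:
   conformality, immersion, and vanishing of the tension field
   tau(F) = trace nabla dF (minimality, for a conformal immersion).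
   The tension field is expressed in the left-invariant orthonormal frame
   E1 = d1 - x2/2 d3, E2 = d2 + x1/2 d3, E3 = d3 ([E1,E2] = E3), whose
   Levi-Civita connection is nabla_{E1}E2 = E3/2 = -nabla_{E2}E1,
   nabla_{E1}E3 = nabla_{E3}E1 = -E2/2, nabla_{E2}E3 = nabla_{E3}E2 = E1/2,
   nabla_{Ei}Ei = 0.  With F_x = sum a_i E_i, F_y = sum b_i E_i:
     tau = sum_i (d_x a_i + d_y b_i) E_i + sum_{i,j}(a_i a_j + b_i b_j) nabla_{E_i}E_j. *)
Definition frame3 (P V : R3) : R := p3 V + / 2 * (p2 P * p1 V - p1 P * p2 V).

Definition cmi_point (P Fx Fy L : R3) : Prop :=
  nil_inner P Fx Fx = nil_inner P Fy Fy /\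
  nil_inner P Fx Fy = 0 /\
  Fx <> (0, 0, 0) /\
  p1 L + p2 Fx * frame3 P Fx + p2 Fy * frame3 P Fy = 0 /\
  p2 L - p1 Fx * frame3 P Fx - p1 Fy * frame3 P Fy = 0 /\
  p3 L + / 2 * (p2 P * p1 L - p1 P * p2 L) = 0.

Definition conformal_minimal_immersion (X : RiemannSurface) (f : rs_car X -> R3) : Prop :=
  forall i, exists F1 F2 F3 : C -> R,
    (forall x, rs_dom X i x ->
       f x = (F1 (rs_chart X i x), F2 (rs_chart X i x), F3 (rs_chart X i x))) /\
    let D := chart_overlap (rs_dom X) (rs_chart X) i i in
    exists d1 d2 d3,
      smooth_tower D F1 d1 /\ smooth_tower D F2 d2 /\ smooth_tower D F3 d3 /\
      forall p, D p ->
        cmi_point (F1 p, F2 p, F3 p)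
          (d1 (false :: nil) p, d2 (false :: nil) p, d3 (false :: nil) p)
          (d1 (true :: nil) p, d2 (true :: nil) p, d3 (true :: nil) p)
          (d1 (false :: false :: nil) p + d1 (true :: true :: nil) p,
           d2 (false :: false :: nil) p + d2 (true :: true :: nil) p,
           d3 (false :: false :: nil) p + d3 (true :: true :: nil) p).

Definition iso_one_param (rho : R -> R3 -> R3) : Prop :=
  (forall t, exists a th, forall x, rho t x = iso_act a th x) /\
  (forall s t x, rho (s + t) x = rho s (rho t x)) /\
  (forall x, continuity (fun t => p1 (rho t x)) /\
             continuity (fun t => p2 (rho t x)) /\
             continuity (fun t => p3 (rho t x))).

(* The conclusion only concerns the image of f, which is invariant under the
   one-parameter group rho; so the theorem follows from the classification of
   continuous one-parameter groups rho of Iso_o(Nil_3) = Nil_3 ⋊ U_1.  Writing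
   rho t = (a(t), (c(t), s(t))):
   - the rotation part (c, s) is a continuous homomorphism R -> U_1, hence
     t |-> e^{ikt}; this, like Cauchy's equation for continuous additive maps,
     is proved by a density argument along the dyadic multiples of a small d;
   - if k = 0, a is a continuous homomorphism R -> Nil_3 whose horizontal part
     is linear, hence a(t) = t a(1): rho is a group of left translations;
   - if k <> 0, rho (pi/k) is a half-turn about a vertical axis through some v
     and commutes with every rho s; this pins the horizontal part of a, and a
     corrected vertical drift is additive, hence linear: rho t is the
     helicoidal motion of angle kt about the axis through v. *)

From Stdlib Require Import Reals Lra Lia ZArith.
Open Scope R_scope.

Section DenseSubgroup.
Variable Q : R -> Prop.
Hypothesis Q_add : forall s t, Q s -> Q t -> Q (s + t).
Hypothesis Q_opp : forall t, Q t -> Q (- t).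

Lemma subgroup_int_mult (e : R) : Q e -> forall z : Z, Q (IZR z * e).
Proof.
  intros He.
  assert (Q0 : Q 0) by (replace 0 with (e + - e) by ring; auto).
  assert (Hnat : forall n : nat, Q (INR n * e)).
  { induction n as [|n IH].
    - simpl. replace (0 * e) with 0 by ring. exact Q0.
    - rewrite S_INR. replace ((INR n + 1) * e) with (INR n * e + e) by ring. auto. }
  intros z. destruct (Z_le_gt_dec 0 z).
  - rewrite <- (Z2Nat.id z), <- INR_IZR_INZ by lia. apply Hnat.
  - replace (IZR z * e) with (- (INR (Z.to_nat (- z)) * e))
      by (rewrite INR_IZR_INZ, Z2Nat.id, opp_IZR by lia; ring).
    auto.
Qed.

Lemma subgroup_approx :
  (forall eta, 0 < eta -> exists e, 0 < e < eta /\ Q e) ->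
  forall x eta, 0 < eta -> exists y r, Q y /\ x = y + r /\ 0 <= r < eta.
Proof.
  intros Hsmall x eta Heta.
  destruct (Hsmall eta Heta) as [e [[He Hee] Qe]].
  destruct (archimed (x / e)) as [Hup1 Hup2].
  set (m := (up (x / e) - 1)%Z).
  exists (IZR m * e), (x - IZR m * e). split; [|split].
  - now apply subgroup_int_mult.
  - ring.
  - assert (Hx : x = x / e * e) by (field; lra).
    unfold m. rewrite minus_IZR. split.
    + assert ((IZR (up (x / e)) - 1) * e <= x / e * e) by (apply Rmult_le_compat_r; lra). lra.
    + assert (x / e * e < (IZR (up (x / e)) - 1 + 1) * e) by (apply Rmult_lt_compat_r; lra). lra.
Qed.

Lemma vanish_by_density (E : R -> R) (K : R) :
  (forall eta, 0 < eta -> exists e, 0 < e < eta /\ Q e) ->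
  continuity_pt E 0 -> E 0 = 0 -> 0 <= K ->
  (forall y r, Q y -> Rabs (E (y + r)) <= K * Rabs (E r)) ->
  forall x, E x = 0.
Proof.
  intros Hsmall HE HE0 HK Hctrl x.
  destruct (Req_dec (E x) 0) as [|Hne]; [assumption|exfalso].
  set (eps := Rabs (E x)).
  assert (Heps : 0 < eps) by (apply Rabs_pos_lt; exact Hne).
  destruct (HE (eps / (K + 1))) as [delta [Hdelta Hnear]].
  { apply Rdiv_lt_0_compat; lra. }
  destruct (subgroup_approx Hsmall x delta Hdelta) as [y [r [Qy [Hx Hr]]]].
  assert (Hsmall_r : Rabs (E r) < eps / (K + 1)).
  { destruct (Req_dec r 0) as [->|Hr0].
    - rewrite HE0, Rabs_R0. apply Rdiv_lt_0_compat; lra.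
    - specialize (Hnear r). simpl in Hnear. unfold R_dist in Hnear.
      rewrite HE0, !Rminus_0_r in Hnear. apply Hnear.
      split; [split; [exact I | auto] | rewrite Rabs_right; lra]. }
  assert (Hbound : K * Rabs (E r) <= K * (eps / (K + 1))).
  { apply Rmult_le_compat_l; lra. }
  assert (K * (eps / (K + 1)) < eps).
  { apply Rmult_lt_reg_r with (K + 1); [lra|].
    replace (K * (eps / (K + 1)) * (K + 1)) with (K * eps) by (field; lra). nra. }
  pose proof (Hctrl y r Qy) as Hc. rewrite <- Hx in Hc. fold eps in Hc. lra.
Qed.

End DenseSubgroup.

Lemma halvings_dense (Q : R -> Prop) (d : R) : 0 < d ->
  (forall n : nat, Q (d * (/ 2) ^ n)) ->
  forall eta, 0 < eta -> exists e, 0 < e < eta /\ Q e.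
Proof.
  intros Hd HQ eta Heta.
  destruct (pow_lt_1_zero (/ 2)) with (y := eta / d) as [N HN].
  { rewrite Rabs_right; lra. }
  { apply Rdiv_lt_0_compat; lra. }
  exists (d * (/ 2) ^ N). split; [split|exact (HQ N)].
  - apply Rmult_lt_0_compat; [lra|]. apply pow_lt; lra.
  - specialize (HN N (le_n N)). rewrite Rabs_right in HN
      by (apply Rle_ge, pow_le; lra).
    apply Rmult_lt_reg_l with (/ d); [apply Rinv_0_lt_compat; lra|].
    replace (/ d * (d * (/ 2) ^ N)) with ((/ 2) ^ N) by (field; lra).
    unfold Rdiv in HN. lra.
Qed.

Lemma additive_linear (g : R -> R) :
  (forall s t, g (s + t) = g s + g t) -> continuity_pt g 0 ->
  forall t, g t = t * g 1.
Proof.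
  intros Hadd Hc.
  assert (g0 : g 0 = 0) by (pose proof (Hadd 0 0) as H; rewrite Rplus_0_r in H; lra).
  set (Q := fun t => g t = t * g 1).
  assert (Q_add : forall s t, Q s -> Q t -> Q (s + t)).
  { unfold Q; intros s t Hs Ht. rewrite Hadd, Hs, Ht. ring. }
  assert (Q_opp : forall t, Q t -> Q (- t)).
  { unfold Q; intros t Ht. pose proof (Hadd t (- t)) as H.
    rewrite Rplus_opp_r, g0 in H. lra. }
  assert (Q_halvings : forall n : nat, Q (1 * (/ 2) ^ n)).
  { induction n as [|n IH]; unfold Q in *; simpl.
    - rewrite !Rmult_1_r. ring.
    - pose proof (Hadd (1 * (/ 2 * (/ 2) ^ n)) (1 * (/ 2 * (/ 2) ^ n))) as H.
      replace (1 * (/ 2 * (/ 2) ^ n) + 1 * (/ 2 * (/ 2) ^ n)) with (1 * (/ 2) ^ n)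
        in H by field.
      rewrite IH in H. lra. }
  intros t. apply Rminus_diag_uniq. revert t.
  apply (vanish_by_density Q Q_add Q_opp (fun t => g t - t * g 1) 1).
  - apply (halvings_dense Q 1); [lra | exact Q_halvings].
  - apply continuity_pt_minus; [exact Hc|].
    apply continuity_pt_mult; [apply derivable_continuous_pt; reg|].
    apply continuity_pt_const. intros a b; reflexivity.
  - rewrite g0. ring.
  - lra.
  - intros y r Qy. rewrite Hadd, Qy. rewrite Rmult_1_l. right. f_equal. ring.
Qed.

Lemma right_half_circle_angle (c s : R) : 0 < c -> c ^ 2 + s ^ 2 = 1 ->
  exists phi, - (PI / 2) < phi < PI / 2 /\ cos phi = c /\ sin phi = s.
Proof.
  intros Hc Hcirc. exists (atan (s / c)).
  assert (Hsqrt : sqrt (1 + (s / c)²) = / c).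
  { apply sqrt_lem_1.
    - unfold Rsqr. nra.
    - left. apply Rinv_0_lt_compat. exact Hc.
    - unfold Rsqr. field_simplify_eq; [nra | lra]. }
  pose proof (atan_bound (s / c)).
  rewrite cos_atan, sin_atan, Hsqrt. repeat split; try lra; field; lra.
Qed.

(* A point of the unit circle with positive abscissa is determined by its
   "square" under complex squaring: halving angles is unique on the right half. *)
Lemma half_angle_unique (c s th : R) : 0 < c -> 0 < cos th ->
  c ^ 2 + s ^ 2 = 1 -> c ^ 2 - s ^ 2 = cos (2 * th) -> 2 * s * c = sin (2 * th) ->
  c = cos th /\ s = sin th.
Proof.
  intros Hc Hcos Hcirc Hc2 Hs2.
  rewrite cos_2a_cos in Hc2. rewrite sin_2a in Hs2.
  assert (Hcc : c = cos th).
  { assert ((c - cos th) * (c + cos th) = 0) by nra.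
    destruct (Rmult_integral _ _ H); lra. }
  split; [exact Hcc|]. subst c.
  apply Rmult_eq_reg_r with (2 * cos th); lra.
Qed.

Section CircleHomomorphism.
Variables Cf Sf : R -> R.
Hypothesis circle : forall t, Cf t ^ 2 + Sf t ^ 2 = 1.
Hypothesis Cf_add : forall s t, Cf (s + t) = Cf s * Cf t - Sf s * Sf t.
Hypothesis Sf_add : forall s t, Sf (s + t) = Sf s * Cf t + Cf s * Sf t.
Hypothesis Cf_cont : continuity_pt Cf 0.
Hypothesis Sf_cont : continuity_pt Sf 0.

Lemma circle_hom_0 : Cf 0 = 1 /\ Sf 0 = 0.
Proof.
  pose proof (Cf_add 0 0) as HC. pose proof (Sf_add 0 0) as HS.
  rewrite Rplus_0_r in HC, HS. pose proof (circle 0).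
  assert (HS0 : Sf 0 = 0).
  { destruct (Req_dec (Sf 0) 0) as [|Hne]; [assumption|].
    assert (Cf 0 = 1 / 2) by (apply Rmult_eq_reg_l with (Sf 0); [lra | exact Hne]).
    nra. }
  split; [nra | exact HS0].
Qed.

Lemma circle_hom_opp (t : R) : Cf (- t) = Cf t /\ Sf (- t) = - Sf t.
Proof.
  destruct circle_hom_0 as [C0 S0].
  pose proof (Cf_add t (- t)) as HC. pose proof (Sf_add t (- t)) as HS.
  rewrite Rplus_opp_r, C0 in HC. rewrite Rplus_opp_r, S0 in HS.
  split.
  - transitivity ((Cf t ^ 2 + Sf t ^ 2) * Cf (- t)); [rewrite circle; ring|].
    transitivity (Cf t * (Cf t * Cf (- t) - Sf t * Sf (- t))
                  + Sf t * (Sf t * Cf (- t) + Cf t * Sf (- t))); [ring|].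
    rewrite <- HC, <- HS. ring.
  - transitivity ((Cf t ^ 2 + Sf t ^ 2) * Sf (- t)); [rewrite circle; ring|].
    transitivity (- Sf t * (Cf t * Cf (- t) - Sf t * Sf (- t))
                  + Cf t * (Sf t * Cf (- t) + Cf t * Sf (- t))); [ring|].
    rewrite <- HC, <- HS. ring.
Qed.

Lemma circle_hom_exp : exists k, forall t, Cf t = cos (k * t) /\ Sf t = sin (k * t).
Proof.
  destruct circle_hom_0 as [C0 S0].
  (* On a neighbourhood [-d, d] of 0 the abscissa stays positive. *)
  destruct (Cf_cont 1) as [d0 [Hd0 Hnear]]; [lra|].
  set (d := d0 / 2).
  assert (Hd : 0 < d) by (unfold d; lra).
  assert (Cf_pos : forall t, 0 < t <= d -> 0 < Cf t).
  { intros t Ht. specialize (Hnear t). simpl in Hnear. unfold R_dist in Hnear.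
    rewrite C0, Rminus_0_r in Hnear.
    assert (Rabs (Cf t - 1) < 1).
    { apply Hnear. split; [split; [exact I | lra]|]. rewrite Rabs_right; unfold d in *; lra. }
    apply Rabs_def2 in H. lra. }
  destruct (right_half_circle_angle (Cf d) (Sf d)) as [phi [Hphi [Hcos Hsin]]];
    [apply Cf_pos; lra | apply circle |].
  set (k := phi / d). exists k.
  set (Q := fun t => Cf t = cos (k * t) /\ Sf t = sin (k * t)).
  assert (Q_add : forall s t, Q s -> Q t -> Q (s + t)).
  { unfold Q; intros s t [Hs1 Hs2] [Ht1 Ht2].
    rewrite Cf_add, Sf_add, Rmult_plus_distr_l, cos_plus, sin_plus, Hs1, Hs2, Ht1, Ht2.
    split; ring. }
  assert (Q_opp : forall t, Q t -> Q (- t)).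
  { unfold Q; intros t [Ht1 Ht2]. destruct (circle_hom_opp t) as [-> ->].
    replace (k * - t) with (- (k * t)) by ring. rewrite cos_neg, sin_neg. lra. }
  (* Agreement on the halvings of d, by repeated angle halving. *)
  assert (Q_halvings : forall n : nat, Q (d * (/ 2) ^ n)).
  { induction n as [|n [IH1 IH2]]; unfold Q.
    - simpl. rewrite Rmult_1_r. unfold k. replace (phi / d * d) with phi by (field; lra).
      split; congruence.
    - set (t := d * (/ 2) ^ S n).
      assert (Hq : 0 < (/ 2) ^ S n <= 1).
      { clear IH1 IH2. induction (S n) as [|m IHm]; simpl; [lra | nra]. }
      assert (Ht : 0 < t <= d) by (unfold t; split; nra).
      assert (H2t : d * (/ 2) ^ n = t + t) by (unfold t; simpl; field).
      rewrite H2t, Cf_add in IH1. rewrite H2t, Sf_add in IH2.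
      replace (k * (t + t)) with (2 * (k * t)) in IH1, IH2 by ring.
      apply half_angle_unique; [apply Cf_pos; exact Ht | | apply circle | nra | nra].
      replace (k * t) with (phi * (/ 2) ^ S n) by (unfold k, t; field; lra).
      apply cos_gt_0; nra. }
  (* The defect E vanishes by density of the dyadic multiples of d. *)
  set (E := fun t => Rabs (Cf t - cos (k * t)) + Rabs (Sf t - sin (k * t))).
  assert (HE : forall t, E t = 0).
  { apply (vanish_by_density Q Q_add Q_opp E 2).
    - exact (halvings_dense Q d Hd Q_halvings).
    - unfold E. apply continuity_pt_plus;
        (apply (continuity_pt_comp (fun t => _ - _) Rabs);
         [apply continuity_pt_minus; [assumption | apply derivable_continuous_pt; reg]
         | apply Rcontinuity_abs]).
    - unfold E. rewrite C0, S0, Rmult_0_r, cos_0, sin_0, !Rminus_diag, Rabs_R0. ring.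
    - lra.
    - intros y r [Hy1 Hy2]. unfold E.
      rewrite Cf_add, Sf_add, Rmult_plus_distr_l, cos_plus, sin_plus, Hy1, Hy2.
      set (a := Cf r - cos (k * r)). set (b := Sf r - sin (k * r)).
      replace (cos (k * y) * Cf r - sin (k * y) * Sf r
               - (cos (k * y) * cos (k * r) - sin (k * y) * sin (k * r)))
        with (cos (k * y) * a - sin (k * y) * b) by (unfold a, b; ring).
      replace (sin (k * y) * Cf r + cos (k * y) * Sf r
               - (sin (k * y) * cos (k * r) + cos (k * y) * sin (k * r)))
        with (sin (k * y) * a + cos (k * y) * b) by (unfold a, b; ring).
      assert (Hunit : forall u v, Rabs u <= 1 -> Rabs v <= 1 ->
                Rabs (u * a + v * b) <= Rabs a + Rabs b).
      { intros u v Hu Hv. eapply Rle_trans; [apply Rabs_triang|].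
        rewrite !Rabs_mult. pose proof (Rabs_pos a). pose proof (Rabs_pos b). nra. }
      assert (Hc : Rabs (cos (k * y)) <= 1) by (apply Rabs_le; apply COS_bound).
      assert (Hs : Rabs (sin (k * y)) <= 1) by (apply Rabs_le; apply SIN_bound).
      assert (Hs' : Rabs (- sin (k * y)) <= 1) by (rewrite Rabs_Ropp; exact Hs).
      pose proof (Hunit _ _ Hc Hs') as H1. pose proof (Hunit _ _ Hs Hc) as H2.
      replace (cos (k * y) * a - sin (k * y) * b) with (cos (k * y) * a + - sin (k * y) * b)
        by ring.
      rewrite Rabs_right by (apply Rle_ge, Rplus_le_le_0_compat; apply Rabs_pos).
      rewrite (Rabs_right (Rabs a + Rabs b))
        by (apply Rle_ge, Rplus_le_le_0_compat; apply Rabs_pos).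
      lra. }
  intros t. specialize (HE t). unfold E in HE.
  pose proof (Rabs_pos (Cf t - cos (k * t))). pose proof (Rabs_pos (Sf t - sin (k * t))).
  assert (Habs0 : forall u, Rabs u = 0 -> u = 0).
  { intros u Hu. destruct (Req_dec u 0) as [|Hne]; [assumption|].
    exfalso. exact (Rabs_no_R0 u Hne Hu). }
  split; apply Rminus_diag_uniq, Habs0; lra.
Qed.

End CircleHomomorphism.

(* The isometry x |-> a . (rotation by (c, s)) x of Nil_3; for (c, s) on the
   unit circle this is the element (a, c + i s) of Nil_3 ⋊ U_1. *)
Definition iso_cs (a : R3) (c s : R) (x : R3) : R3 :=
  nmul a (c * p1 x - s * p2 x, s * p1 x + c * p2 x, p3 x).

Lemma iso_act_cs (a : R3) (th : R) (x : R3) :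
  iso_act a th x = iso_cs a (cos th) (sin th) x.
Proof. reflexivity. Qed.

Lemma R3_eq (x y : R3) : p1 x = p1 y -> p2 x = p2 y -> p3 x = p3 y -> x = y.
Proof.
  destruct x as [[x1 x2] x3], y as [[y1 y2] y3]; unfold p1, p2, p3; simpl.
  intros -> -> ->. reflexivity.
Qed.

(* Normal form of a helicoidal motion: rotation by the angle tau about the
   vertical axis through (v1, v2), composed with the vertical translation tau c. *)
Lemma helicoidal_iso_cs (c v1 v2 tau : R) (x : R3) :
  helicoidal c v1 v2 tau x =
  iso_cs ((1 - cos tau) * v1 + sin tau * v2, (1 - cos tau) * v2 - sin tau * v1,
          tau * c - / 2 * sin tau * (v1 ^ 2 + v2 ^ 2))
         (cos tau) (sin tau) x.
Proof.
  pose proof (sin2_cos2 tau) as Hcirc. unfold Rsqr in Hcirc.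
  unfold helicoidal, iso_act, iso_cs, nrot, nmul, ninv.
  rewrite cos_0, sin_0. apply R3_eq; cbn [p1 p2 p3 fst snd]; [ring | ring |].
  set (C := cos tau) in *. set (S := sin tau) in *.
  transitivity (tau * c - / 2 * S * (v1 ^ 2 + v2 ^ 2) + p3 x
     + / 2 * (((1 - C) * v1 + S * v2) * (S * p1 x + C * p2 x)
              - ((1 - C) * v2 - S * v1) * (C * p1 x - S * p2 x))
     - / 2 * (v2 * p1 x - v1 * p2 x) * (S * S + C * C - 1)); [ring | rewrite Hcirc; ring].

Qed.

Section OneParameterGroup.
Variable rho : R -> R3 -> R3.
Hypothesis rho_group : iso_one_param rho.

(* Coordinates of rho t in Nil_3 ⋊ U_1: translation part and rotation (c, s). *)
Definition transl (t : R) : R3 := rho t (0, 0, 0).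
Definition rcos (t : R) : R := p1 (rho t (1, 0, 0)) - p1 (transl t).
Definition rsin (t : R) : R := p2 (rho t (1, 0, 0)) - p2 (transl t).

Lemma rho_iso_cs (t : R) (x : R3) :
  rho t x = iso_cs (transl t) (rcos t) (rsin t) x /\ rcos t ^ 2 + rsin t ^ 2 = 1.
Proof.
  destruct rho_group as [Hform _]. destruct (Hform t) as [a [th Ht]].
  unfold rcos, rsin, transl. rewrite !Ht, !iso_act_cs.
  pose proof (sin2_cos2 th) as Hcirc. unfold Rsqr in Hcirc.
  unfold iso_cs, nmul; cbn [p1 p2 p3 fst snd]. split.
  - apply R3_eq; cbn [p1 p2 p3 fst snd]; ring.
  - transitivity (sin th * sin th + cos th * cos th); [ring | exact Hcirc].
Qed.

Lemma transl_add (s t : R) :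
  transl (s + t) = iso_cs (transl s) (rcos s) (rsin s) (transl t).
Proof.
  destruct rho_group as [_ [Hlaw _]]. unfold transl at 1.
  rewrite Hlaw. apply rho_iso_cs.
Qed.

Lemma rot_add (s t : R) :
  rcos (s + t) = rcos s * rcos t - rsin s * rsin t /\
  rsin (s + t) = rsin s * rcos t + rcos s * rsin t.
Proof.
  destruct rho_group as [_ [Hlaw _]].
  assert (He1 : rho (s + t) (1, 0, 0) =
                iso_cs (transl s) (rcos s) (rsin s)
                  (iso_cs (transl t) (rcos t) (rsin t) (1, 0, 0))).
  { rewrite Hlaw, (proj1 (rho_iso_cs s _)), (proj1 (rho_iso_cs t _)). reflexivity. }
  change (rcos (s + t)) with (p1 (rho (s + t) (1, 0, 0)) - p1 (transl (s + t))).
  change (rsin (s + t)) with (p2 (rho (s + t) (1, 0, 0)) - p2 (transl (s + t))).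
  rewrite He1, transl_add. unfold iso_cs, nmul; cbn [p1 p2 p3 fst snd]. split; ring.
Qed.

Lemma coords_continuous :
  continuity_pt rcos 0 /\ continuity_pt rsin 0 /\
  continuity_pt (fun t => p1 (transl t)) 0 /\ continuity_pt (fun t => p2 (transl t)) 0 /\
  continuity_pt (fun t => p3 (transl t)) 0.
Proof.
  destruct rho_group as [_ [_ Hcont]].
  destruct (Hcont (0, 0, 0)) as [K1 [K2 K3]]. destruct (Hcont (1, 0, 0)) as [L1 [L2 _]].
  unfold rcos, rsin, transl.
  repeat split; try apply continuity_pt_minus; auto.
Qed.

Lemma rotation_speed : exists k, forall t, rcos t = cos (k * t) /\ rsin t = sin (k * t).
Proof.
  destruct coords_continuous as [Kc [Ks _]].
  apply circle_hom_exp; auto.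
  - intros t. exact (proj2 (rho_iso_cs t (0, 0, 0))).
  - intros s t. exact (proj1 (rot_add s t)).
  - intros s t. exact (proj2 (rot_add s t)).
Qed.

Lemma translation_case :
  (forall t, rcos t = 1 /\ rsin t = 0) ->
  forall t x, rho t x =
    nmul (t * p1 (transl 1), t * p2 (transl 1), t * p3 (transl 1)) x.
Proof.
  intros Hrot.
  destruct coords_continuous as [_ [_ [K1 [K2 K3]]]].
  assert (Hadd : forall s t, transl (s + t) = nmul (transl s) (transl t)).
  { intros s t. rewrite transl_add. destruct (Hrot s) as [-> ->].
    unfold iso_cs. f_equal. apply R3_eq; cbn [p1 p2 p3 fst snd]; ring. }
  assert (H1 : forall t, p1 (transl t) = t * p1 (transl 1)).
  { apply (additive_linear (fun t => p1 (transl t))); [|exact K1].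
    intros s t. rewrite Hadd. reflexivity. }
  assert (H2 : forall t, p2 (transl t) = t * p2 (transl 1)).
  { apply (additive_linear (fun t => p2 (transl t))); [|exact K2].
    intros s t. rewrite Hadd. reflexivity. }
  (* the commutator term of the group law vanishes on a line through 0 *)
  assert (H3 : forall t, p3 (transl t) = t * p3 (transl 1)).
  { apply (additive_linear (fun t => p3 (transl t))); [|exact K3].
    intros s t. rewrite Hadd. unfold nmul at 1. cbn [p3 snd].
    rewrite (H1 s), (H1 t), (H2 s), (H2 t). ring. }
  intros t x. rewrite (proj1 (rho_iso_cs t x)). destruct (Hrot t) as [-> ->].
  replace (t * p1 (transl 1), t * p2 (transl 1), t * p3 (transl 1)) with (transl t)
    by (apply R3_eq; cbn [p1 p2 p3 fst snd]; auto).
  unfold iso_cs, nmul. apply R3_eq; cbn [p1 p2 p3 fst snd]; ring.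
Qed.

(* Fixed horizontal axis: rho t0 is the half-turn about the vertical axis
   through v = transl t0 / 2; every rho s commutes with it, which forces the
   horizontal translation part of rho s to be the rotation of v about itself. *)
Lemma transl_horizontal (t0 : R) : rcos t0 = -1 -> rsin t0 = 0 ->
  forall s,
    p1 (transl s) = (1 - rcos s) * (p1 (transl t0) / 2) + rsin s * (p2 (transl t0) / 2) /\
    p2 (transl s) = (1 - rcos s) * (p2 (transl t0) / 2) - rsin s * (p1 (transl t0) / 2).
Proof.
  intros Hc Hs s.
  pose proof (transl_add s t0) as Hst. pose proof (transl_add t0 s) as Hts.
  rewrite Rplus_comm, Hts, Hc, Hs in Hst.
  pose proof (f_equal p1 Hst) as E1. pose proof (f_equal p2 Hst) as E2.
  unfold iso_cs, nmul in E1, E2. cbn [p1 p2 p3 fst snd] in E1, E2.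
  split; lra.
Qed.

Lemma rotation_case (k : R) : k <> 0 ->
  (forall t, rcos t = cos (k * t) /\ rsin t = sin (k * t)) ->
  exists c v1 v2, forall t x, rho t x = helicoidal c v1 v2 (k * t) x.
Proof.
  intros Hk Hrot.
  set (t0 := PI / k).
  assert (Ht0 : rcos t0 = -1 /\ rsin t0 = 0).
  { destruct (Hrot t0) as [-> ->]. unfold t0.
    replace (k * (PI / k)) with PI by (field; exact Hk). rewrite cos_PI, sin_PI. auto. }
  destruct Ht0 as [Hc0 Hs0].
  set (v1 := p1 (transl t0) / 2). set (v2 := p2 (transl t0) / 2).
  set (w := v1 ^ 2 + v2 ^ 2).
  pose proof (transl_horizontal t0 Hc0 Hs0) as Hhor. fold v1 v2 in Hhor.
  (* the vertical drift, corrected by the twisting of the group law, is linear *)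
  set (drift := fun s => p3 (transl s) + / 2 * rsin s * w).
  assert (Hdrift : forall s, drift s = s * drift 1).
  { destruct coords_continuous as [_ [Ks [_ [_ K3]]]].
    apply additive_linear.
    - intros s t. unfold drift. rewrite transl_add. destruct (rot_add s t) as [_ ->].
      unfold iso_cs, nmul. cbn [p1 p2 p3 fst snd].
      destruct (Hhor s) as [-> ->]. destruct (Hhor t) as [-> ->].
      pose proof (proj2 (rho_iso_cs s (0, 0, 0))) as Hcirc.
      transitivity (p3 (transl s) + / 2 * rsin s * w + (p3 (transl t) + / 2 * rsin t * w)
                    + / 2 * w * rsin t * (rcos s ^ 2 + rsin s ^ 2 - 1));
        [unfold w; ring | rewrite Hcirc; ring] .
    - apply continuity_pt_plus; [exact K3|].
      apply continuity_pt_mult; [apply continuity_pt_mult; [|exact Ks]|];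
        apply continuity_pt_const; intros a b; reflexivity. }
  exists (drift 1 / k), v1, v2. intros t x.
  rewrite helicoidal_iso_cs, (proj1 (rho_iso_cs t x)).
  destruct (Hrot t) as [Hct Hst]. rewrite <- Hct, <- Hst.
  f_equal. destruct (Hhor t) as [E1 E2].
  apply R3_eq; cbn [p1 p2 p3 fst snd]; [exact E1 | exact E2 |].
  pose proof (Hdrift t) as E3. unfold drift at 1 in E3. fold w.
  replace (k * t * (drift 1 / k)) with (t * drift 1) by (field; exact Hk).
  lra.
Qed.
End OneParameterGroup.

Theorem one_param_classification (rho : R -> R3 -> R3) : iso_one_param rho ->
  (exists a1 a2 c, forall t x, rho t x = nmul (t * a1, t * a2, t * c) x) \/
  (exists c v1 v2 k, k <> 0 /\ forall t x, rho t x = helicoidal c v1 v2 (k * t) x).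
Proof.
  intros Hrho. destruct (rotation_speed rho Hrho) as [k Hk].
  destruct (Req_dec k 0) as [->|Hk0].
  - left. exists (p1 (transl rho 1)), (p2 (transl rho 1)), (p3 (transl rho 1)).
    apply translation_case; [exact Hrho|].
    intros t. destruct (Hk t) as [-> ->]. rewrite Rmult_0_l, cos_0, sin_0. auto.
  - right. destruct (rotation_case rho Hrho k Hk0 Hk) as [c [v1 [v2 Hhel]]].
    exists c, v1, v2, k. auto.
Qed.

Theorem mainTheorem4 (X : RiemannSurface) (f : rs_car X -> R3)
  (gamma : R -> rs_car X -> rs_car X) (rho : R -> R3 -> R3) :
  conformal_minimal_immersion X f ->
  aut_one_param X gamma ->
  iso_one_param rho ->
  (exists t p, rho t p <> p) ->
  (forall t x, f (gamma t x) = rho t (f x)) ->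
  (* helicoidal surface *)
  (exists c a1 a2 : R, forall t x, exists y, f y = helicoidal c a1 a2 t (f x))
  \/
  (* translation invariant surface *)
  (exists a1 a2 c : R, (a1, a2, c) <> (0, 0, 0) /\
     forall t x, exists y, f y = nmul (t * a1, t * a2, t * c) (f x)).
Proof.
  intros _ _ Hrho [t0 [p0 Hmoves]] Hequiv.
  destruct (one_param_classification rho Hrho)
    as [[a1 [a2 [c Htr]]] | [c [v1 [v2 [k [Hk Hhel]]]]]].
  - (* the translation vector is nonzero since rho is not the identity *)
    right. exists a1, a2, c. split.
    + intros Ha. injection Ha as -> -> ->. apply Hmoves.
      rewrite Htr. apply R3_eq; unfold nmul; cbn [p1 p2 p3 fst snd]; ring.
    + intros t x. exists (gamma t x). rewrite Hequiv. apply Htr.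
  - (* the helicoidal motion of angle t is rho (t / k) *)
    left. exists c, v1, v2. intros t x. exists (gamma (t / k) x).
    rewrite Hequiv, Hhel. f_equal. field. exact Hk.
Qed.
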